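(* Let $p\ge1$, $m=2p$, $j=\mathrm{diag}(I_p,-I_p)$, $n>0$. Let $A$ be an $n\times n$ matrix with $\det A\neq0$, $S_0$ an $n\times n$ matrix and $\Pi_0$ an $n\times m$ matrix with $AS_0-S_0A^*=i\Pi_0j\Pi_0^*$. Define for $k\ge0$ $$\Pi_{k+1}=\Pi_k+iA^{-1}\Pi_kj,\qquad S_{k+1}=S_k+A^{-1}S_k(A^* )^{-1}+A^{-1}\Pi_k\Pi_k^*(A^* )^{-1}.$$ If $S_0>0$, then $S_k>0$ for all $k\ge0$ and $C_k:=I_m+\Pi_k^*S_k^{-1}\Pi_k-\Pi_{k+1}^*S_{k+1}^{-1}\Pi_{k+1}>0$ for all $k\ge0$.
   Context: $I_r$ denotes the $r\times r$ identity matrix; $>0$ means positive definite. *)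

From HB Require Import structures.
From mathcomp Require Import all_boot all_order all_algebra.
Set Implicit Arguments. Unset Strict Implicit. Unset Printing Implicit Defensive.
Import Order.TTheory GRing.Theory Num.Theory.
Local Open Scope ring_scope.

Definition hconj (C : numClosedFieldType) (r c : nat) (M : 'M[C]_(r, c))
  : 'M[C]_(c, r) := (map_mx Num.conj M)^T.

Definition posdef (C : numClosedFieldType) (n : nat) (M : 'M[C]_n) : Prop :=
  M = hconj M /\
  forall x : 'cV[C]_n, x != 0 -> 0 < (hconj x *m M *m x) 0 0.

Definition jmx (C : numClosedFieldType) (p : nat) : 'M[C]_(p + p) :=
  block_mx 1%:M 0 0 (- 1%:M).

Fixpoint PiS (C : numClosedFieldType) (n p : nat) (A S0 : 'M[C]_n)
  (Pi0 : 'M[C]_(n, p + p)) (k : nat) : 'M[C]_(n, p + p) * 'M[C]_n :=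
  match k with
  | O => (Pi0, S0)
  | k'.+1 =>
    let: (Pi, Sm) := PiS A S0 Pi0 k' in
    (Pi + 'i *: (invmx A *m Pi *m jmx C p),
     Sm + invmx A *m Sm *m invmx (hconj A)
       + invmx A *m Pi *m hconj Pi *m invmx (hconj A))
  end.

Definition Pik (C : numClosedFieldType) (n p : nat) (A S0 : 'M[C]_n)
  (Pi0 : 'M[C]_(n, p + p)) (k : nat) := (PiS A S0 Pi0 k).1.
Definition Sk (C : numClosedFieldType) (n p : nat) (A S0 : 'M[C]_n)
  (Pi0 : 'M[C]_(n, p + p)) (k : nat) := (PiS A S0 Pi0 k).2.

From HB Require Import structures.
From mathcomp Require Import all_boot all_order all_algebra.
From mathcomp Require Import ring.

Set Implicit Arguments.
Unset Strict Implicit.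
Unset Printing Implicit Defensive.
Import Order.TTheory GRing.Theory Num.Theory.
Local Open Scope ring_scope.

(* With B = A^-1, one step of the recursion reads
     S' = S + B S B^* + B Pi Pi^* B^*,    Pi' = Pi + i B Pi j,
   so S' > 0 is a sum of a positive definite and two positive semidefinite
   congruences of S and I.  For C = I + Pi^* S^-1 Pi - Pi'^* S'^-1 Pi' and
   y <> 0, put x = - S'^-1 Pi' y; then y^* C y is the value at (x, y) of the
   Hermitian form of [[S', Pi'], [Pi'^*, I + Pi^* S^-1 Pi]], and using only
   j^* = j, j^2 = I and i^2 = -1 that form is the sum of squares
     (x + S^-1 Pi y)^* S (x + S^-1 Pi y) + (B^* x)^* S (B^* x)
       + |Pi^* B^* x + i j y|^2.
   If x <> 0 the middle term is positive (B^* is invertible), and if x = 0 the last one is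
   |j y|^2 > 0. *)

(* Taking entries without unfolding products lets [ring] treat the 1 x 1
   products of matrices as atoms. *)
Lemma entryD (V : zmodType) m n (A B : 'M[V]_(m, n)) i j :
  (A + B) i j = A i j + B i j.
Proof. by rewrite mxE. Qed.

Lemma entryN (V : zmodType) m n (A : 'M[V]_(m, n)) i j : (- A) i j = - A i j.
Proof. by rewrite mxE. Qed.

Lemma entryZ (R : pzRingType) m n a (A : 'M[R]_(m, n)) i j :
  (a *: A) i j = a * A i j.
Proof. by rewrite mxE. Qed.

Section ConjugateTranspose.
Variable C : numClosedFieldType.

Lemma hconjM m n k (A : 'M[C]_(m, n)) (B : 'M[C]_(n, k)) :
  hconj (A *m B) = hconj B *m hconj A.
Proof. by rewrite /hconj map_mxM trmx_mul. Qed.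

Lemma hconjK m n (A : 'M[C]_(m, n)) : hconj (hconj A) = A.
Proof. by apply/matrixP => i j; rewrite !mxE conjCK. Qed.

Lemma hconjD m n (A B : 'M[C]_(m, n)) : hconj (A + B) = hconj A + hconj B.
Proof. by apply/matrixP => i j; rewrite !mxE rmorphD. Qed.

Lemma hconjN m n (A : 'M[C]_(m, n)) : hconj (- A) = - hconj A.
Proof. by apply/matrixP => i j; rewrite !mxE rmorphN. Qed.

Lemma hconjZ m n a (A : 'M[C]_(m, n)) : hconj (a *: A) = a^* *: hconj A.
Proof. by apply/matrixP => i j; rewrite !mxE rmorphM. Qed.

Lemma hconj1 n : hconj (1%:M : 'M[C]_n) = 1%:M.
Proof. by apply/matrixP => i j; rewrite !mxE eq_sym rmorph_nat. Qed.

Lemma hconj0 m n : hconj (0 : 'M[C]_(m, n)) = 0.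
Proof. by apply/matrixP => i j; rewrite !mxE rmorph0. Qed.

Lemma hconj_eq0 m n (A : 'M[C]_(m, n)) : (hconj A == 0) = (A == 0).
Proof.
apply/eqP/eqP => [hA0|->]; last exact: hconj0.
by rewrite -[A]hconjK hA0 hconj0.
Qed.

Lemma hconjV n (A : 'M[C]_n) : hconj (invmx A) = invmx (hconj A).
Proof. by rewrite /hconj map_invmx trmx_inv. Qed.

Lemma unitmx_hconj n (A : 'M[C]_n) : (hconj A \in unitmx) = (A \in unitmx).
Proof. by rewrite /hconj unitmx_tr map_unitmx. Qed.

Lemma hconj_jmx p : hconj (jmx C p) = jmx C p.
Proof.
rewrite /jmx /hconj map_block_mx tr_block_mx.
by rewrite map_mxN map_mx1 !map_mx0 !trmx0 linearN /= trmx1.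
Qed.

Lemma jmx_mulK p : jmx C p *m jmx C p = 1%:M.
Proof.
rewrite /jmx mulmx_block !mulmx0 !mul0mx !mulmx1 !addr0 !add0r mulmxN mulmx1.
by rewrite opprK [RHS]scalar_mx_block.
Qed.

Lemma mulmx_jmxK m p (X : 'M[C]_(m, p + p)) : X *m jmx C p *m jmx C p = X.
Proof. by rewrite -mulmxA jmx_mulK mulmx1. Qed.

End ConjugateTranspose.

Section HermitianForms.
Variable C : numClosedFieldType.

Lemma gram_entryE n (w : 'cV[C]_n) : (hconj w *m w) 0 0 = \sum_k `|w k 0| ^+ 2.
Proof. by rewrite mxE; apply: eq_bigr => k _; rewrite !mxE normCK mulrC. Qed.

Lemma gram_ge0 n (w : 'cV[C]_n) : 0 <= (hconj w *m w) 0 0.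
Proof. by rewrite gram_entryE; apply: sumr_ge0 => k _; rewrite exprn_ge0. Qed.

Lemma gram_gt0 n (w : 'cV[C]_n) : w != 0 -> 0 < (hconj w *m w) 0 0.
Proof.
move=> w_neq0; rewrite lt0r gram_ge0 andbT; apply: contra w_neq0 => /eqP.
rewrite gram_entryE => /psumr_eq0P w0; apply/eqP/matrixP => i k.
rewrite (ord1 k) mxE; apply/eqP; rewrite -normr_eq0 -sqrf_eq0.
by rewrite w0 // => l _; rewrite exprn_ge0.
Qed.

Lemma posdef_form_ge0 n (S : 'M[C]_n) (x : 'cV[C]_n) :
  posdef S -> 0 <= (hconj x *m S *m x) 0 0.
Proof.
case=> _ S_pos; have [->|x_neq0] := eqVneq x 0; first by rewrite mulmx0 mxE.
exact/ltW/S_pos.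
Qed.

Lemma posdef_unitmx n (S : 'M[C]_n) : posdef S -> S \in unitmx.
Proof.
case=> _ S_pos; rewrite unitmxE unitfE; apply/negP => /det0P [v v_neq0 vS0].
have := S_pos (hconj v); rewrite hconj_eq0 => /(_ v_neq0).
by rewrite hconjK vS0 mul0mx mxE ltxx.
Qed.

(* At the minimiser x = - S^-1 Pi y of the form of [[S, Pi], [Pi^*, 0]] the
   value is minus the Schur complement term. *)
Lemma schur_form n m (S : 'M[C]_n) (Pi : 'M[C]_(n, m)) (y : 'cV[C]_m) :
  S \in unitmx -> hconj S = S ->
  let x := - (invmx S *m Pi *m y) in
  hconj x *m S *m x + hconj x *m Pi *m y + hconj y *m hconj Pi *m x
  = - (hconj y *m hconj Pi *m invmx S *m Pi *m y).
Proof.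
move=> S_unit S_herm x; rewrite /x hconjN !hconjM hconjV S_herm.
rewrite !(mulNmx, mulmxN, opprK) !mulmxA mulmxKV //.
by apply/matrixP => i k; rewrite !(entryD, entryN); ring.
Qed.

End HermitianForms.

Section RecursionStep.
Variables (C : numClosedFieldType) (n q : nat).
Implicit Types (B S : 'M[C]_n) (Pi : 'M[C]_(n, q + q)).

Definition step_Pi B Pi : 'M[C]_(n, q + q) := Pi + 'i *: (B *m Pi *m jmx C q).

Definition step_S B S Pi : 'M[C]_n :=
  S + B *m S *m hconj B + B *m Pi *m hconj Pi *m hconj B.

Lemma posdef_step_S B S Pi : posdef S -> posdef (step_S B S Pi).
Proof.
move=> S_pd; have [S_herm S_pos] := S_pd; split.
  by rewrite /step_S !(hconjD, hconjM, hconjK) -S_herm !mulmxA.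
move=> x x_neq0.
have -> : hconj x *m step_S B S Pi *m x
  = hconj x *m S *m x + hconj (hconj B *m x) *m S *m (hconj B *m x)
    + hconj (hconj Pi *m hconj B *m x) *m (hconj Pi *m hconj B *m x).
  by rewrite /step_S !(hconjM, hconjK, mulmxDl, mulmxDr) !mulmxA.
by rewrite !entryD -addrA ltr_pwDl ?S_pos ?addr_ge0 ?gram_ge0 ?posdef_form_ge0.
Qed.

Lemma step_form_sum_squares B S Pi (x : 'cV[C]_n) (y : 'cV[C]_(q + q)) :
  S \in unitmx -> hconj S = S ->
  let w := x + invmx S *m Pi *m y in
  let u := hconj Pi *m hconj B *m x + 'i *: (jmx C q *m y) in
  hconj x *m step_S B S Pi *m x + hconj x *m step_Pi B Pi *m y
    + hconj y *m hconj (step_Pi B Pi) *m x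
    + hconj y *m (1%:M + hconj Pi *m invmx S *m Pi) *m y
  = hconj w *m S *m w + hconj (hconj B *m x) *m S *m (hconj B *m x)
    + hconj u *m u.
Proof.
move=> S_unit S_herm w u.
have Si_herm : hconj (invmx S) = invmx S by rewrite hconjV S_herm.
rewrite /w /u /step_Pi /step_S.
rewrite !(hconjD, hconjM, hconjZ, hconjK, hconj_jmx, Si_herm, conjCi).
rewrite !(mulmxDl, mulmxDr, mulmxN, mulNmx, mul1mx, mulmx1).
rewrite -!(scalemxAl, scalemxAr) !mulmxA !scalerA.
rewrite !mulmxK // !mulmxKV // !mulmx_jmxK.
rewrite mulNr -expr2 sqrCi opprK scale1r.
by apply/matrixP => i k; rewrite !(entryD, entryN, entryZ); ring.
Qed.

Lemma posdef_step_C B S Pi : B \in unitmx -> posdef S ->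
  posdef (1%:M + hconj Pi *m invmx S *m Pi
          - hconj (step_Pi B Pi) *m invmx (step_S B S Pi) *m step_Pi B Pi).
Proof.
move=> B_unit S_pd; have S'_pd := posdef_step_S B Pi S_pd.
set S' := step_S B S Pi in S'_pd *; set Pi' := step_Pi B Pi.
have [S_herm _] := S_pd; have [S'_herm _] := S'_pd.
have S_unit := posdef_unitmx S_pd; have S'_unit := posdef_unitmx S'_pd.
split.
  rewrite !(hconjD, hconjN, hconjM, hconjK, hconj1, hconjV).
  by rewrite -S_herm !mulmxA.
move=> y y_neq0; set x := - (invmx S' *m Pi' *m y).
have -> : hconj y *m (1%:M + hconj Pi *m invmx S *m Pi
                      - hconj Pi' *m invmx S' *m Pi') *m y
  = hconj x *m S' *m x + hconj x *m Pi' *m y + hconj y *m hconj Pi' *m x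
    + hconj y *m (1%:M + hconj Pi *m invmx S *m Pi) *m y.
  rewrite (schur_form Pi' y S'_unit (esym S'_herm)).
  rewrite !(mulmxDl, mulmxDr, mulNmx, mulmxN) !mulmxA.
  by apply/matrixP => i k; rewrite !(entryD, entryN); ring.
rewrite (step_form_sum_squares B Pi x y S_unit (esym S_herm)) !entryD.
have [Bx0|Bx_neq0] := eqVneq (hconj B *m x) 0.
  have x0 : x = 0.
    by rewrite -[x](mulKmx (_ : hconj B \in unitmx)) ?Bx0 ?mulmx0 ?unitmx_hconj.
  rewrite x0 !mulmx0 !add0r.
  apply: ltr_wpDl; first by rewrite addr_ge0 ?posdef_form_ge0 // mxE.
  apply: gram_gt0; rewrite scaler_eq0 negb_or neq0Ci /=.
  apply: contra y_neq0 => /eqP jy0; apply/eqP.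
  by rewrite -[y]mul1mx -(jmx_mulK C q) -mulmxA jy0 mulmx0.
rewrite -addrA ltr_wpDl ?posdef_form_ge0 // ltr_pwDl ?gram_ge0 //.
by have [_ ->] := S_pd.
Qed.

End RecursionStep.

Lemma PiS_succ (C : numClosedFieldType) n p (A S0 : 'M[C]_n)
    (Pi0 : 'M[C]_(n, p + p)) k :
  PiS A S0 Pi0 k.+1 =
  (step_Pi (invmx A) (Pik A S0 Pi0 k),
   step_S (invmx A) (Sk A S0 Pi0 k) (Pik A S0 Pi0 k)).
Proof. by rewrite /Pik /Sk /step_Pi /step_S hconjV /=; case: PiS. Qed.

Theorem proposition3p1 (C : numClosedFieldType) (p n : nat)
  (A S0 : 'M[C]_n) (Pi0 : 'M[C]_(n, p + p)) :
  (1 <= p)%N -> (0 < n)%N -> \det A != 0 ->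
  A *m S0 - S0 *m hconj A = 'i *: (Pi0 *m jmx C p *m hconj Pi0) ->
  posdef S0 ->
  (forall k : nat, posdef (Sk A S0 Pi0 k)) /\
  (forall k : nat,
     posdef (1%:M + hconj (Pik A S0 Pi0 k) *m invmx (Sk A S0 Pi0 k) *m Pik A S0 Pi0 k
             - hconj (Pik A S0 Pi0 k.+1) *m invmx (Sk A S0 Pi0 k.+1)
               *m Pik A S0 Pi0 k.+1)).
Proof.
move=> _ _ detA_neq0 _ S0_pd.
have Ai_unit : invmx A \in unitmx by rewrite unitmx_inv unitmxE unitfE.
have Sk_pd k : posdef (Sk A S0 Pi0 k).
  elim: k => [|k IHk] //.
  by rewrite {1}/Sk PiS_succ; apply: posdef_step_S.
split=> // k.
by rewrite {3 4}/Pik {2}/Sk PiS_succ; apply: posdef_step_C.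
Qed.
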